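(* Let $\Sigma=\Sigma_c\,\dot\cup\,\Sigma_{uc}=\Sigma_o\,\dot\cup\,\Sigma_{uo}$ be a finite alphabet, and let $\mathbf{G}=\mathop{\|}_{k\in[1,N]}\mathbf{G}_k$ be the plant, with $L(\mathbf G)$ and $L_m(\mathbf G)$ its closed and marked behaviors. Let the specification be $E=\mathop{\|}_{p\in\mathcal P}E_p$ with $E_p\subseteq\Sigma_{e,p}^*$ and $\Sigma_e=\bigcup_{p}\Sigma_{e,p}$, and let $P_e:\Sigma^*\to\Sigma_e^*$ be the natural projection. For each $p\in\mathcal P$, let $\mathbf G_p=\|\{\mathbf G_k: \Sigma_k\cap\Sigma_{e,p}\neq\emptyset\}$ have alphabet $\Sigma_p\supseteq\Sigma_{e,p}$, and let $P_p:\Sigma^*\to\Sigma_p^*$ be the natural projection. Assume every component is relevant to some specification, so that $$L(\mathbf G)=\bigcap_{p}P_p^{-1}L(\mathbf G_p),\qquad L_m(\mathbf G)=\bigcap_p P_p^{-1}L_m(\mathbf G_p).$$ Assume the following. (H1) For each $p\in\mathcal P$ there is a generator $\mathbf{SUP}_p$ over $\Sigma_p$ (a partial-observation decentralized supervisor) with $$L_m(\mathbf G_p)\cap L_m(\mathbf{SUP}_p)=K_p,\qquad L(\mathbf G_p)\cap L(\mathbf{SUP}_p)=\overline{K_p},$$ where $K_p=\sup\mathcal{CO}(E_p\,\|\,L_m(\mathbf G_p))\subseteq E_p\,\|\,L_m(\mathbf G_p)$. (H2) There are generators $\mathbf{CO}_q$ over alphabets $\Sigma_q\subseteq\Sigma$,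 $q\in\mathcal Q$ (partial-observation coordinators), with natural projections $P_q:\Sigma^*\to\Sigma_q^*$. Define $$L_m(\mathbf{SYS})=L_m(\mathbf G)\cap\bigcap_p P_p^{-1}L_m(\mathbf{SUP}_p)\cap\bigcap_q P_q^{-1}L_m(\mathbf{CO}_q),$$ $$L(\mathbf{SYS})=L(\mathbf G)\cap\bigcap_p P_p^{-1}L(\mathbf{SUP}_p)\cap\bigcap_q P_q^{-1}L(\mathbf{CO}_q).$$ Assume these are nonblocking, i.e. $L(\mathbf{SYS})=\overline{L_m(\mathbf{SYS})}$. (H3) For each $p$ and each $\alpha\in\Sigma_{c,p}:=\Sigma_c\cap\Sigma_p$, there is a partial-observation local controller $\mathbf{LOC}_{\alpha,p}$ for $\alpha$ with alphabet $\Sigma_{\alpha,p}\subseteq\Sigma_p$. These satisfy $$L(\mathbf G_p)\cap\big(\mathop{\|}_{\alpha\in\Sigma_{c,p}}L(\mathbf{LOC}_{\alpha,p})\big)=L(\mathbf G_p)\cap L(\mathbf{SUP}_p),$$ $$L_m(\mathbf G_p)\cap\big(\mathop{\|}_{\alpha\in\Sigma_{c,p}}L_m(\mathbf{LOC}_{\alpha,p})\big)=L_m(\mathbf G_p)\cap L_m(\mathbf{SUP}_p).$$ Similarly, for each $q$ and each $\alpha\in\Sigma_{c,q}:=\Sigma_c\cap\Sigma_q$, there is a partial-observation local controller $\mathbf{LOC}_{\alpha,q}$ with alphabet $\Sigma_{\alpha,q}\subseteq\Sigma_q$. These satisfy $$L(\mathbf G)\cap\bigcap_{\alpha\in\Sigma_{c,q}}P_{\alpha,q}^{-1}L(\mathbf{LOC}_{\alpha,q})=L(\mathbf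 G)\cap P_q^{-1}L(\mathbf{CO}_q),$$ and the analogous identity holds with $L$ replaced by $L_m$ throughout. Here $P_{\alpha,q}:\Sigma^*\to\Sigma_{\alpha,q}^*$ is the natural projection. For each $\alpha\in\Sigma_c$, let $\mathbf{LOC}_\alpha$, with alphabet $\Sigma_\alpha$, be the synchronous product of all $\mathbf{LOC}_{\alpha,p}$ (over $p$ with $\alpha\in\Sigma_p$) and all $\mathbf{LOC}_{\alpha,q}$ (over $q$ with $\alpha\in\Sigma_q$). If there are none, $\mathbf{LOC}_\alpha$ is the one-state marked generator over $\{\alpha\}$ with an $\alpha$-selfloop. Let $P_\alpha:\Sigma^*\to\Sigma_\alpha^*$ be the natural projection, and set $$L_m(\mathbf{LOC})=\bigcap_{\alpha\in\Sigma_c}P_\alpha^{-1}L_m(\mathbf{LOC}_\alpha),\qquad L(\mathbf{LOC})=\bigcap_{\alpha\in\Sigma_c}P_\alpha^{-1}L(\mathbf{LOC}_\alpha).$$ Then each $\mathbf{LOC}_\alpha$ is a partial-observation local controller for $\alpha$, and $$L_m(\mathbf G)\cap L_m(\mathbf{LOC})\subseteq L_m(\mathbf G)\cap P_e^{-1}E,$$ $$L(\mathbf G)\cap L(\mathbf{LOC})=\overline{L_m(\mathbf G)\cap L_m(\mathbf{LOC})}.$$ Moreover, $L(\mathbf G)\cap L(\mathbf{LOC})=L(\mathbf{SYS})$ and $L_m(\mathbf G)\cap L_m(\mathbf{LOC})=L_m(\mathbf{SYS})$.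
   Context: Generators and languages. A generator $\mathbf G=(Q,\Sigma,\delta,q_0,Q_m)$ is a finite automaton with partial transition function $\delta$. Its closed behavior is $L(\mathbf G)=\{s\in\Sigma^*:\delta(q_0,s)\text{ defined}\}$ and its marked behavior is $L_m(\mathbf G)=\{s\in L(\mathbf G):\delta(q_0,s)\in Q_m\}$. An overbar denotes prefix closure. Projections and synchronous product. For $\Sigma'\subseteq\Sigma$, the natural projection $\Sigma^*\to\Sigma'^*$ erases the events not in $\Sigma'$, and $P^{-1}$ denotes its inverse image. The synchronous product of languages $L_i\subseteq\Sigma_i^*$ is $\bigcap_i P_i^{-1}L_i$ over $\bigcup_i\Sigma_i$. The synchronous product of generators is the generator realizing the synchronous product of both closed and marked behaviors. Controllability. $\Sigma_c$ and $\Sigma_{uc}$ are the controllable and uncontrollable events. A language $K\subseteq L_m(\mathbf G)$ is controllable if $\overline K\Sigma_{uc}\cap L(\mathbf G)\subseteq\overline K$. Relative observability. $\Sigma_o$ and $\Sigma_{uo}$ are the observable and unobservable events, and $P:\Sigma^*\to\Sigma_o^*$ is the natural projection. Given $C\subseteq L_m(\mathbf G)$, a language $K\subseteq C$ is $C$-observable if, for all $s,s'$ with $P(s)=P(s')$, both of the following hold: (i) for all $\sigma\in\Sigma$: if $s\sigma\in\overline K$, $s'\in\overline C$ and $s'\sigma\in L(\mathbf G)$, then $s'\sigma\in\overline K$; (ii) if $s\in K$ and $s'\in\overline C\cap L_m(\mathbf G)$, then $s'\in K$. $\sup\mathcal{CO}(F)$ denotes the supremal controllable and $C$-observable sublanguage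 of $F$. Local controllers. A partial-observation local controller for $\alpha\in\Sigma_c$ is a generator $\mathbf{LOC}_\alpha=(Y_\alpha,\Sigma_\alpha,\eta_\alpha,y_{0,\alpha},Y_{m,\alpha})$ satisfying: (i) $\Sigma_\alpha\subseteq\Sigma_o\cup\{\alpha\}$, and it enables/disables only $\alpha$; (ii) every transition labelled by an unobservable event is a selfloop, i.e. for all $y$ and all $\sigma\in\Sigma_{uo}$, if $\eta_\alpha(y,\sigma)$ is defined then $\eta_\alpha(y,\sigma)=y$. *)

From mathcomp Require Import all_boot.
Set Implicit Arguments. Unset Strict Implicit. Unset Printing Implicit Defensive.

Section Defs.
Variable S : finType.

Definition lang := seq S -> Prop.

(* A generator: finite state set, alphabet, partial transition function,
   initial state, marker states. Transitions on events outside the alphabet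
   are ignored (see [step]). *)
Record gen := Gen {
  gst : finType;
  galph : {set S};
  gdelta : gst -> S -> option gst;
  ginit : gst;
  gmark : {set gst} }.

Definition step (G : gen) (q : gst G) (a : S) : option (gst G) :=
  if a \in galph G then gdelta q a else None.

Definition run (G : gen) (q : gst G) (s : seq S) : option (gst G) :=
  foldl (fun oq a => obind (fun q' => step q' a) oq) (Some q) s.

Definition Lgen (G : gen) : lang := fun s => isSome (run (ginit G) s).
Definition Lmgen (G : gen) : lang :=
  fun s => if run (ginit G) s is Some q then q \in gmark G else false.

Definition proj (A : {set S}) (s : seq S) : seq S := [seq x <- s | x \in A].

Definition word_over (A : {set S}) (s : seq S) : Prop := all (fun x => x \in A) s.

Definition pclos (K : lang) : lang := fun s => exists t, K (s ++ t).

(* synchronous product of a (filtered) finite family of languages L i over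
   alphabets A i : the intersection of inverse projections, over the union
   of the alphabets *)
Definition syncL (I : finType) (sel : pred I) (A : I -> {set S})
  (L : I -> lang) : lang :=
  fun s => word_over (\bigcup_(i | sel i) A i) s /\
           forall i, sel i -> L i (proj (A i) s).

Definition sync2L (A1 : {set S}) (L1 : lang) (A2 : {set S}) (L2 : lang) : lang :=
  fun s => word_over (A1 :|: A2) s /\ L1 (proj A1 s) /\ L2 (proj A2 s).

Definition controllable (Lg Lmg : lang) (Sc : {set S}) (K : lang) : Prop :=
  (forall s, K s -> Lmg s) /\
  forall s a, pclos K s -> a \notin Sc -> Lg (rcons s a) ->
              pclos K (rcons s a).

Definition relobs (Lg Lmg : lang) (So : {set S}) (C K : lang) : Prop :=
  (forall s, K s -> C s) /\
  forall s s', proj So s = proj So s' ->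
    (forall a, pclos K (rcons s a) -> pclos C s' -> Lg (rcons s' a) ->
               pclos K (rcons s' a)) /\
    (K s -> pclos C s' -> Lmg s' -> K s').

Definition supCO (Lg Lmg : lang) (Sc So : {set S}) (F : lang) : lang :=
  fun s => exists K : lang, (forall t, K t -> F t) /\
    controllable Lg Lmg Sc K /\ relobs Lg Lmg So F K /\ K s.

Definition is_loc (So : {set S}) (alpha : S) (G : gen) : Prop :=
  galph G \subset So :|: [set alpha] /\
  forall (y y' : gst G) a, a \notin So -> step y a = Some y' -> y' = y.

Definition sync2g (G1 G2 : gen) : gen :=
  @Gen (gst G1 * gst G2)%type (galph G1 :|: galph G2)
    (fun x a =>
       match a \in galph G1, a \in galph G2 with
       | true, true => obind (fun y1 => omap (fun y2 => (y1, y2)) (step x.2 a))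
                             (step x.1 a)
       | true, false => omap (fun y1 => (y1, x.2)) (step x.1 a)
       | false, true => omap (fun y2 => (x.1, y2)) (step x.2 a)
       | false, false => None
       end)
    (ginit G1, ginit G2)
    [set x | (x.1 \in gmark G1) && (x.2 \in gmark G2)].

Definition selfloop_gen (alpha : S) : gen :=
  @Gen unit [set alpha] (fun _ a => if a == alpha then Some tt else None)
    tt setT.

Definition syncl_gen (alpha : S) (l : seq gen) : gen :=
  match l with
  | [::] => selfloop_gen alpha
  | G :: Gs => foldl sync2g G Gs
  end.

Variables (IK IP IQ : finType).

Definition relevant (Gk : IK -> gen) (Se : IP -> {set S}) (p : IP) (k : IK) : bool :=
  galph (Gk k) :&: Se p != set0.

Definition alphP (Gk : IK -> gen) (Se : IP -> {set S}) (p : IP) : {set S} :=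
  \bigcup_(k | relevant Gk Se p k) galph (Gk k).

Definition LGp (Gk : IK -> gen) (Se : IP -> {set S}) (p : IP) : lang :=
  syncL (relevant Gk Se p) (fun k => galph (Gk k)) (fun k => Lgen (Gk k)).
Definition LmGp (Gk : IK -> gen) (Se : IP -> {set S}) (p : IP) : lang :=
  syncL (relevant Gk Se p) (fun k => galph (Gk k)) (fun k => Lmgen (Gk k)).

Definition LG (Gk : IK -> gen) : lang :=
  syncL predT (fun k => galph (Gk k)) (fun k => Lgen (Gk k)).
Definition LmG (Gk : IK -> gen) : lang :=
  syncL predT (fun k => galph (Gk k)) (fun k => Lmgen (Gk k)).

Definition PeInvE (Se : IP -> {set S}) (E : IP -> lang) : lang :=
  fun s => syncL predT Se E (proj (\bigcup_p Se p) s).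

Definition LSYS (Gk : IK -> gen) (Se : IP -> {set S}) (SUP : IP -> gen)
  (CO : IQ -> gen) : lang :=
  fun s => LG Gk s /\ (forall p, Lgen (SUP p) (proj (alphP Gk Se p) s)) /\
           (forall q, Lgen (CO q) (proj (galph (CO q)) s)).
Definition LmSYS (Gk : IK -> gen) (Se : IP -> {set S}) (SUP : IP -> gen)
  (CO : IQ -> gen) : lang :=
  fun s => LmG Gk s /\ (forall p, Lmgen (SUP p) (proj (alphP Gk Se p) s)) /\
           (forall q, Lmgen (CO q) (proj (galph (CO q)) s)).

Definition LOCa (Gk : IK -> gen) (Se : IP -> {set S}) (CO : IQ -> gen)
  (LOCp : IP -> S -> gen) (LOCq : IQ -> S -> gen) (alpha : S) : gen :=
  syncl_gen alpha
    ([seq LOCp p alpha | p <- enum IP & alpha \in alphP Gk Se p] ++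
     [seq LOCq q alpha | q <- enum IQ & alpha \in galph (CO q)]).

Definition LLOC Gk Se CO LOCp LOCq (Sc : {set S}) : lang :=
  fun s => forall alpha, alpha \in Sc ->
    Lgen (LOCa Gk Se CO LOCp LOCq alpha)
         (proj (galph (LOCa Gk Se CO LOCp LOCq alpha)) s).
Definition LmLOC Gk Se CO LOCp LOCq (Sc : {set S}) : lang :=
  fun s => forall alpha, alpha \in Sc ->
    Lmgen (LOCa Gk Se CO LOCp LOCq alpha)
          (proj (galph (LOCa Gk Se CO LOCp LOCq alpha)) s).

End Defs.

(* Every behaviour in sight is a conjunction of component behaviours read
   through natural projections: a synchronous product of generators accepts a
   word iff each factor accepts its projection, while alphabet bounds and
   unobservable selfloops survive the product, so each LOC_alpha is a local
   controller.  Hence L(G) ∩ L(LOC) regroups, first by event alpha and then by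
   supervisor or coordinator, into L(G) intersected with the local-controller
   realisations of every SUP_p and CO_q, which (H3) turns into L(SYS); likewise
   for marked behaviours.  Nonblockingness is then (H2), and the specification
   is respected because K_p is contained in E_p || L_m(G_p). *)

From mathcomp Require Import all_boot.
From Stdlib Require List.
Set Implicit Arguments. Unset Strict Implicit. Unset Printing Implicit Defensive.

Lemma Forall_filter (T : eqType) (P : T -> Prop) (q : pred T) (r : seq T) :
  List.Forall P (filter q r) <-> {in r, forall i, q i -> P i}.
Proof.
elim: r => [|x r IH] /=; first by split=> // _; apply: List.Forall_nil.
have Pr : {in x :: r, forall i, q i -> P i} <->
          (q x -> P x) /\ {in r, forall i, q i -> P i}.
  split=> [H|[Px H] i]; last by rewrite in_cons => /orP[/eqP->|/H].
  by split=> [|i ir]; apply: H; rewrite in_cons ?eqxx ?ir ?orbT.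
rewrite Pr -IH; case: (q x); last by split=> [|[]].
by rewrite List.Forall_cons_iff; split=> [[]|[]]; auto.
Qed.

Lemma Forall_filter_enum (I : finType) (P : I -> Prop) (q : pred I) :
  List.Forall P (filter q (enum I)) <-> forall i, q i -> P i.
Proof.
rewrite Forall_filter; split=> [H i | H i _]; last exact: H.
by apply: H; rewrite mem_enum.
Qed.

Section Languages.
Variable S : finType.
Implicit Types (A B : {set S}) (s : seq S) (F K L : lang S).

Lemma proj_proj A B s : A \subset B -> proj A (proj B s) = proj A s.
Proof.
move=> sAB; rewrite /proj -filter_predI; apply: eq_filter => x /=.
by case xA: (x \in A); rewrite //= (subsetP sAB _ xA).
Qed.

Lemma word_over_proj A s : word_over A (proj A s).
Proof. exact: filter_all. Qed.

Lemma syncL_proj (I : finType) (sel : pred I) (Al : I -> {set S})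
    (L : I -> lang S) s :
  syncL predT Al L s -> syncL sel Al L (proj (\bigcup_(i | sel i) Al i) s).
Proof.
move=> [_ Ls]; split=> [|i seli]; first exact: word_over_proj.
by rewrite proj_proj; [apply: Ls | apply: (bigcup_sup i)].
Qed.

Lemma eq_pclos K L : (forall s, K s <-> L s) -> forall s, pclos K s <-> pclos L s.
Proof. by move=> KL s; split=> -[t /KL Kst]; exists t. Qed.

Lemma supCO_sub (Lg Lmg : lang S) (Sc So : {set S}) F s :
  supCO Lg Lmg Sc So F s -> F s.
Proof. by move=> [K [KF [_ [_ Ks]]]]; apply: KF. Qed.

Lemma PeInvE_proj (IP : finType) (Se : IP -> {set S}) (E : IP -> lang S) s :
  (forall p, E p (proj (Se p) s)) -> PeInvE Se E s.
Proof.
move=> Es; split=> [|p _]; first exact: word_over_proj.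
by rewrite proj_proj; [apply: Es | apply: (bigcup_sup p)].
Qed.

End Languages.

Section Generators.
Variable S : finType.
Implicit Types (A B So : {set S}) (a : S) (s : seq S) (G : gen S).

Lemma run_cons G (q : gst G) a s :
  run q (a :: s) = obind (fun q' => run q' s) (step q a).
Proof. by rewrite /run /=; case: (step q a) => //=; elim: s. Qed.

Lemma run_sync2g G1 G2 (x1 : gst G1) (x2 : gst G2) s :
  word_over (galph G1 :|: galph G2) s ->
  run (G := sync2g G1 G2) (x1, x2) s =
  obind (fun y1 => omap (pair y1) (run x2 (proj (galph G2) s)))
        (run x1 (proj (galph G1) s)).
Proof.
elim: s x1 x2 => [|a s IH] x1 x2 //= /andP[aU ws].
rewrite run_cons {1}/step aU /proj /=; move: aU; rewrite inE.
case: (a \in galph G1); case: (a \in galph G2) => //= _; rewrite ?run_cons.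
- case: (step x1 a) => [y1|] //=.
  by case: (step x2 a) => [y2|]; rewrite /= ?IH //; case: (run y1 _).
- by case: (step x1 a) => [y1|] //=; rewrite IH.
- case: (step x2 a) => [y2|] /=; first by rewrite IH.
  by case: (run x1 _).
Qed.

Lemma Lgen_sync2g G1 G2 s :
  Lgen (sync2g G1 G2) (proj (galph G1 :|: galph G2) s) <->
  Lgen G1 (proj (galph G1) s) /\ Lgen G2 (proj (galph G2) s).
Proof.
rewrite /Lgen /= run_sync2g; last exact: word_over_proj.
rewrite !proj_proj ?subsetUl ?subsetUr //.
by case: (run _ _) => [y1|]; case: (run _ _) => [y2|]; split => // -[].
Qed.

Lemma Lmgen_sync2g G1 G2 s :
  Lmgen (sync2g G1 G2) (proj (galph G1 :|: galph G2) s) <->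
  Lmgen G1 (proj (galph G1) s) /\ Lmgen G2 (proj (galph G2) s).
Proof.
rewrite /Lmgen /= run_sync2g; last exact: word_over_proj.
rewrite !proj_proj ?subsetUl ?subsetUr //.
case: (run _ _) => [y1|]; case: (run _ _) => [y2|] /=.
  by rewrite inE /=; split => /andP.
all: by split => // -[].
Qed.

Lemma run_selfloop_gen a s : word_over [set a] s ->
  run (G := selfloop_gen a) tt s = Some tt.
Proof.
elim: s => //= b s IH /andP[bA ws].
by rewrite run_cons /step /= bA; move: bA; rewrite inE => ->; apply: IH.
Qed.

Lemma Lgen_selfloop_gen a s : Lgen (selfloop_gen a) (proj [set a] s).
Proof. by rewrite /Lgen run_selfloop_gen //; apply: word_over_proj. Qed.

Lemma Lmgen_selfloop_gen a s : Lmgen (selfloop_gen a) (proj [set a] s).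
Proof. by rewrite /Lmgen run_selfloop_gen ?inE //; apply: word_over_proj. Qed.

Lemma is_loc_sync2g So a G1 G2 :
  is_loc So a G1 -> is_loc So a G2 -> is_loc So a (sync2g G1 G2).
Proof.
move=> [sub1 loop1] [sub2 loop2]; split; first by rewrite subUset sub1 sub2.
move=> [y1 y2] [z1 z2] b bNo; rewrite {1}/step /= inE.
case: (b \in galph G1); case: (b \in galph G2) => //=.
- case E1: (step y1 b) => [y1'|] //=; case E2: (step y2 b) => [y2'|] //= [<- <-].
  by rewrite (loop1 _ _ _ bNo E1) (loop2 _ _ _ bNo E2).
- by case E1: (step y1 b) => [y1'|] //= [<- <-]; rewrite (loop1 _ _ _ bNo E1).
- by case E2: (step y2 b) => [y2'|] //= [<- <-]; rewrite (loop2 _ _ _ bNo E2).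
Qed.

Lemma is_loc_selfloop_gen So a : is_loc So a (selfloop_gen a).
Proof. by split=> [|[] [] //]; apply: subsetUr. Qed.

Lemma is_loc_syncl_gen So a l :
  List.Forall (is_loc So a) l -> is_loc So a (syncl_gen a l).
Proof.
case: l => [|G Gs] /=; first by move=> _; apply: is_loc_selfloop_gen.
elim: Gs G => [|H Gs IH] G /List.Forall_cons_iff[locG] //.
move=> /List.Forall_cons_iff[locH locGs]; apply: IH.
by apply/List.Forall_cons_iff; split => //; apply: is_loc_sync2g.
Qed.

Section SynclGenBehaviour.

Variable X : gen S -> lang S.
Hypothesis X_sync2g : forall G1 G2 s,
  X (sync2g G1 G2) (proj (galph G1 :|: galph G2) s) <->
  X G1 (proj (galph G1) s) /\ X G2 (proj (galph G2) s).
Hypothesis X_selfloop_gen : forall a s, X (selfloop_gen a) (proj [set a] s).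

Lemma X_syncl_gen a l s :
  X (syncl_gen a l) (proj (galph (syncl_gen a l)) s) <->
  List.Forall (fun G => X G (proj (galph G) s)) l.
Proof.
case: l => [|G Gs] /=; first by split=> // _; apply: X_selfloop_gen.
elim: Gs G => [|H Gs IH] G /=.
  by rewrite List.Forall_cons_iff; split=> [|[]//]; split.
by rewrite IH !List.Forall_cons_iff X_sync2g; tauto.
Qed.

End SynclGenBehaviour.

End Generators.

Section LocalControllers.
Variables (S : finType) (Sc : {set S}) (IK : finType) (Gk : IK -> gen S).
Variables (IP : finType) (Se : IP -> {set S}) (SUP : IP -> gen S).
Variables (IQ : finType) (CO : IQ -> gen S).
Variables (LOCp : IP -> S -> gen S) (LOCq : IQ -> S -> gen S).

Local Notation LOC := (LOCa Gk Se CO LOCp LOCq).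
Local Notation SigmaP := (alphP Gk Se).

Lemma is_loc_LOCa So a :
  (forall p, a \in SigmaP p -> is_loc So a (LOCp p a)) ->
  (forall q, a \in galph (CO q) -> is_loc So a (LOCq q a)) ->
  is_loc So a (LOC a).
Proof.
move=> locP locQ; apply: is_loc_syncl_gen.
by rewrite List.Forall_app !List.Forall_map !Forall_filter_enum.
Qed.

Section Behaviour.

Variable X : gen S -> lang S.
Hypothesis X_sync2g : forall G1 G2 s,
  X (sync2g G1 G2) (proj (galph G1 :|: galph G2) s) <->
  X G1 (proj (galph G1) s) /\ X G2 (proj (galph G2) s).
Hypothesis X_selfloop_gen : forall a s, X (selfloop_gen a) (proj [set a] s).

Local Notation plant := (syncL predT (fun k => galph (Gk k)) (fun k => X (Gk k))).
Local Notation subplant p :=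
  (syncL (relevant Gk Se p) (fun k => galph (Gk k)) (fun k => X (Gk k))).
Local Notation X_proj G s := (X G (proj (galph G) s)).

Lemma X_LOCa a s :
  X_proj (LOC a) s <->
  (forall p, a \in SigmaP p -> X_proj (LOCp p a) s) /\
  (forall q, a \in galph (CO q) -> X_proj (LOCq q a) s).
Proof.
by rewrite X_syncl_gen // List.Forall_app !List.Forall_map !Forall_filter_enum.
Qed.

Hypothesis LOCp_alph :
  forall p a, a \in Sc :&: SigmaP p -> galph (LOCp p a) \subset SigmaP p.
Hypothesis LOCp_SUP : forall p s,
  (subplant p s /\ forall a, a \in Sc :&: SigmaP p -> X_proj (LOCp p a) s) <->
  (subplant p s /\ X (SUP p) s).
Hypothesis LOCq_CO : forall q s,
  (plant s /\ forall a, a \in Sc :&: galph (CO q) -> X_proj (LOCq q a) s) <->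
  (plant s /\ X_proj (CO q) s).

Lemma plant_LOC_SYS s :
  plant s /\ (forall a, a \in Sc -> X_proj (LOC a) s) <->
  plant s /\ (forall p, X (SUP p) (proj (SigmaP p) s)) /\
  (forall q, X_proj (CO q) s).
Proof.
have LOCp_proj p a : a \in Sc :&: SigmaP p ->
    X_proj (LOCp p a) (proj (SigmaP p) s) <-> X_proj (LOCp p a) s.
  by move=> aSc; rewrite proj_proj ?LOCp_alph.
split=> [[Gs LOCs] | [Gs [SUPs COs]]].
- split=> //; split=> [p|q].
  + apply: ((LOCp_SUP p _).1 _).2; split; first exact: syncL_proj.
    move=> a aScP; have /setIP[aSc aP] := aScP; apply/(LOCp_proj _ _ aScP).
    exact: ((X_LOCa a s).1 (LOCs a aSc)).1 p aP.
  + apply: ((LOCq_CO q s).1 _).2; split=> // a /setIP[aSc aQ].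
    exact: ((X_LOCa a s).1 (LOCs a aSc)).2 q aQ.
- split=> // a aSc; apply/X_LOCa; split=> [p aP | q aQ].
  + have aScP : a \in Sc :&: SigmaP p by rewrite inE aSc.
    apply/LOCp_proj => //; apply: ((LOCp_SUP p _).2 _).2 aScP.
    by split; [apply: syncL_proj | apply: SUPs].
  + have aScQ : a \in Sc :&: galph (CO q) by rewrite inE aSc.
    exact: ((LOCq_CO q s).2 (conj Gs (COs q))).2 a aScQ.
Qed.

End Behaviour.

End LocalControllers.

Theorem theorem1 (S : finType) (Sc So : {set S})
  (IK : finType) (Gk : IK -> gen S)
  (IP : finType) (Se : IP -> {set S}) (E : IP -> lang S)
  (SUP : IP -> gen S)
  (IQ : finType) (CO : IQ -> gen S)
  (LOCp : IP -> S -> gen S) (LOCq : IQ -> S -> gen S) :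
  (* Sigma_p contains Sigma_{e,p}; E_p is a language over Sigma_{e,p} *)
  (forall p, Se p \subset alphP Gk Se p) ->
  (forall p s, E p s -> word_over (Se p) s) ->
  (* every component is relevant to some specification *)
  (forall k, exists p, relevant Gk Se p k) ->
  (* (H1) decentralized supervisors *)
  (forall p, galph (SUP p) = alphP Gk Se p) ->
  (forall p,
     let Kp := supCO (LGp Gk Se p) (LmGp Gk Se p) Sc So
                 (sync2L (Se p) (E p) (alphP Gk Se p) (LmGp Gk Se p)) in
     (forall s, LmGp Gk Se p s /\ Lmgen (SUP p) s <-> Kp s) /\
     (forall s, LGp Gk Se p s /\ Lgen (SUP p) s <-> pclos Kp s)) ->
  (* (H2) coordinators: nonblocking *)
  (forall s, LSYS Gk Se SUP CO s <-> pclos (LmSYS Gk Se SUP CO) s) ->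
  (* (H3) local controllers for the supervisors *)
  (forall p alpha, alpha \in Sc :&: alphP Gk Se p ->
     is_loc So alpha (LOCp p alpha) /\
     galph (LOCp p alpha) \subset alphP Gk Se p) ->
  (forall p s,
     (LGp Gk Se p s /\ forall alpha, alpha \in Sc :&: alphP Gk Se p ->
        Lgen (LOCp p alpha) (proj (galph (LOCp p alpha)) s)) <->
     (LGp Gk Se p s /\ Lgen (SUP p) s)) ->
  (forall p s,
     (LmGp Gk Se p s /\ forall alpha, alpha \in Sc :&: alphP Gk Se p ->
        Lmgen (LOCp p alpha) (proj (galph (LOCp p alpha)) s)) <->
     (LmGp Gk Se p s /\ Lmgen (SUP p) s)) ->
  (* (H3) local controllers for the coordinators *)
  (forall q alpha, alpha \in Sc :&: galph (CO q) ->
     is_loc So alpha (LOCq q alpha) /\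
     galph (LOCq q alpha) \subset galph (CO q)) ->
  (forall q s,
     (LG Gk s /\ forall alpha, alpha \in Sc :&: galph (CO q) ->
        Lgen (LOCq q alpha) (proj (galph (LOCq q alpha)) s)) <->
     (LG Gk s /\ Lgen (CO q) (proj (galph (CO q)) s))) ->
  (forall q s,
     (LmG Gk s /\ forall alpha, alpha \in Sc :&: galph (CO q) ->
        Lmgen (LOCq q alpha) (proj (galph (LOCq q alpha)) s)) <->
     (LmG Gk s /\ Lmgen (CO q) (proj (galph (CO q)) s))) ->
  (* conclusions *)
  (forall alpha, alpha \in Sc -> is_loc So alpha (LOCa Gk Se CO LOCp LOCq alpha)) /\
  (forall s, LmG Gk s /\ LmLOC Gk Se CO LOCp LOCq Sc s ->
             LmG Gk s /\ PeInvE Se E s) /\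
  (forall s, LG Gk s /\ LLOC Gk Se CO LOCp LOCq Sc s <->
             pclos (fun t => LmG Gk t /\ LmLOC Gk Se CO LOCp LOCq Sc t) s) /\
  (forall s, LG Gk s /\ LLOC Gk Se CO LOCp LOCq Sc s <-> LSYS Gk Se SUP CO s) /\
  (forall s, LmG Gk s /\ LmLOC Gk Se CO LOCp LOCq Sc s <-> LmSYS Gk Se SUP CO s).
Proof.
move=> Se_sub _ _ _ supK nonblocking locP LOCp_L LOCp_Lm locQ LOCq_L LOCq_Lm.
have LOCp_alph p a h := (locP p a h).2.
have L_LOC_SYS := plant_LOC_SYS (@Lgen_sync2g S) (@Lgen_selfloop_gen S)
  LOCp_alph LOCp_L LOCq_L.
have Lm_LOC_SYS := plant_LOC_SYS (@Lmgen_sync2g S) (@Lmgen_selfloop_gen S)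
  LOCp_alph LOCp_Lm LOCq_Lm.
split.
  move=> a aSc; apply: is_loc_LOCa => [p aP | q aQ].
  - by apply: (locP p a _).1; rewrite inE aSc.
  - by apply: (locQ q a _).1; rewrite inE aSc.
split.
  move=> s /Lm_LOC_SYS [Gs [SUPs _]]; split=> //; apply: PeInvE_proj => p.
  have /supCO_sub [_ [+ _]] := ((supK p).1 _).1 (conj (syncL_proj _ Gs) (SUPs p)).
  by rewrite proj_proj.
split.
  move=> s; apply: (iff_trans (L_LOC_SYS s)); apply: (iff_trans (nonblocking s)).
  by apply: eq_pclos => t; apply: iff_sym; apply: Lm_LOC_SYS.
by split.
Qed.
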